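(* Let $q=3$ and $n\geq 3$, and let $c>0$ be a real number such that $k=\frac{n}{3}(\log(2n)+c)$ is an integer. Then $$\Vert \nu_n^{*k}-\pi_n\Vert_{TV}^2\leq \frac52\left(e^{e^{-c}}-1\right).$$
   Context: For integers $n\geq1$, $q\geq2$, the Hamming scheme $H(n,q)$ is the graph with vertex set $X_n=\{0,1,\dots,q-1\}^n$ in which $x$ and $x'$ are adjacent ($x\sim x'$) iff they differ in exactly one coordinate. The simple random walk has transition probability $p_n(x,x')=\frac{1}{n(q-1)}$ if $x\sim x'$ and $0$ otherwise. Let $p_n^{(k)}$ denote the $k$-step transition probability ($p_n^{(0)}(x,x')=\delta_{x,x'}$), $x^{(0)}=(0,\dots,0)$, and $\nu_n^{*k}(x)=p_n^{(k)}(x^{(0)},x)$. $\pi_n$ is the uniform probability measure on $X_n$. For measures $\mu,\nu$ on $X_n$, $\Vert\mu-\nu\Vert_{TV}=\max_{S\subset X_n}|\mu(S)-\nu(S)|$. *)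

From mathcomp Require Import all_boot.
From Stdlib Require Import Reals.
Set Implicit Arguments. Unset Strict Implicit. Unset Printing Implicit Defensive.

Definition hvert (n q : nat) : finType := {ffun 'I_n -> 'I_q}.

Definition hadj (n q : nat) (x y : hvert n q) : bool :=
  #|[set i : 'I_n | x i != y i]| == 1.

Definition hp (n q : nat) (x y : hvert n q) : R :=
  if hadj x y then (/ (INR n * INR (q - 1)))%R else 0%R.

Fixpoint hpk (n q : nat) (k : nat) (x y : hvert n q) : R :=
  match k with
  | 0 => if x == y then 1%R else 0%R
  | k'.+1 => \big[Rplus/0%R]_(z : hvert n q) (hpk k' x z * hp z y)%R
  end.

Definition horigin (n q : nat) : hvert n q.+1 := [ffun _ => ord0].

Definition hnu (n q k : nat) (x : hvert n q.+1) : R := hpk k (horigin n q) x.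

Definition hpi (n q : nat) (x : hvert n q) : R := (/ INR #|hvert n q|)%R.

Definition meas (T : finType) (mu : T -> R) (S : {set T}) : R :=
  \big[Rplus/0%R]_(x in S) mu x.

Definition tv (T : finType) (mu nu : T -> R) : R :=
  \big[Rmax/0%R]_(S : {set T}) Rabs (meas mu S - meas nu S).

(** In each coordinate, R^'I_3 splits into the constants and the mean-zero
    functions; tensoring these projections over the coordinates in a set A
    gives the eigenprojections E_A of the walk, with eigenvalue
    1 - 3|A|/(2n), so nu^{*k} - pi = sum_{A <> set0} lambda_A^k E_A(0, .).
    The E_A(0, .) are orthogonal with squared norm 3^-n 2^|A|, hence, bounding
    the total variation by half the l^1 distance and Cauchy-Schwarz,
    4 TV^2 <= sum_{A <> set0} lambda_A^(2k) 2^|A|.  Sets with lambda_A >= 0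
    contribute at most (1 + 2 e^(-3k/n))^n - 1 <= exp(e^-c) - 1; the others have
    lambda_A >= -1/2 and contribute at most 3^n 4^-k <= 9 e^-c <= 9 (exp(e^-c) - 1). *)

From mathcomp Require Import all_boot all_algebra zify.
From Stdlib Require Import Reals Lra.
From mathcomp Require Import Rstruct.
Import GRing.Theory Num.Theory.
Open Scope R_scope.
Set Implicit Arguments. Unset Strict Implicit.

Definition indR (b : bool) : R := if b then 1 else 0.

Lemma big_indR (I : finType) (P : pred I) :
  \big[Rplus/0]_(i : I) indR (P i) = INR #|P|.
Proof. by rewrite -big_mkcond sumr_const INRE. Qed.

Lemma big_constR (I : finType) (c : R) : \big[Rplus/0]_(i : I) c = INR #|I| * c.
Proof. by rewrite sumr_const -mulr_natl -INRE; congr (INR _ * _); apply: eq_card. Qed.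

Lemma prod_constR (I : finType) (A : pred I) (c : R) :
  \big[Rmult/1]_(i in A) c = c ^ #|A|.
Proof. by rewrite prodr_const RpowE. Qed.

Lemma prod_indR (I : finType) (b : I -> bool) :
  \big[Rmult/1]_i indR (b i) = indR [forall i, b i].
Proof.
case: (boolP [forall i, b i]) => [/forallP H|/forallPn [i Hi]].
  by apply: big1 => i _; rewrite H.
by rewrite (bigD1 i) //= /indR (negbTE Hi) Rmult_0_l.
Qed.

Lemma sum_pow_card (n : nat) (c : R) :
  \big[Rplus/0]_(A : {set 'I_n}) c ^ #|A| = (c + 1) ^ n.
Proof.
rewrite -[n in RHS]card_ord -prod_constR.
rewrite (@bigA_distr R 0 1 Rmult Rplus _ (fun _ => c) (fun _ => 1)).
by apply: eq_bigr => A _; rewrite -big_mkcond prod_constR.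
Qed.

Lemma big_oppR (I : finType) (P : pred I) (F : I -> R) :
  \big[Rplus/0]_(i | P i) - F i = - \big[Rplus/0]_(i | P i) F i.
Proof. exact: sumrN. Qed.

Lemma mulR_sumr (I : finType) (P : pred I) (a : R) (F : I -> R) :
  a * \big[Rplus/0]_(i | P i) F i = \big[Rplus/0]_(i | P i) (a * F i).
Proof. exact: big_distrr. Qed.

Lemma mulR_suml (I : finType) (P : pred I) (a : R) (F : I -> R) :
  \big[Rplus/0]_(i | P i) F i * a = \big[Rplus/0]_(i | P i) (F i * a).
Proof. exact: big_distrl. Qed.

Lemma big_subR (I : finType) (P : pred I) (F G : I -> R) :
  \big[Rplus/0]_(i | P i) (F i - G i)
  = \big[Rplus/0]_(i | P i) F i - \big[Rplus/0]_(i | P i) G i.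
Proof. exact: sumrB. Qed.

Lemma sum_sq_le_card (T : finType) (F : T -> R) :
  (\big[Rplus/0]_x F x) ^ 2 <= INR #|T| * \big[Rplus/0]_x F x ^ 2.
Proof.
set S := \big[Rplus/0]_x F x; set Q := \big[Rplus/0]_x F x ^ 2; set N := INR #|T|.
have row_sum x : \big[Rplus/0]_y (F x - F y) ^ 2 = N * F x ^ 2 + - (2 * F x * S) + Q.
  transitivity (\big[Rplus/0]_y (F x ^ 2 + - (2 * F x * F y) + F y ^ 2)).
    by apply: eq_bigr => y _; ring.
  by rewrite !big_split /= big_oppR big_constR -mulR_sumr.
have total : \big[Rplus/0]_x \big[Rplus/0]_y (F x - F y) ^ 2
             = 2 * (N * Q - S ^ 2).
  rewrite (eq_bigr _ (fun x _ => row_sum x)) !big_split /= big_oppR big_constR.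
  rewrite -mulR_sumr -mulR_suml -mulR_sumr -/S -/Q -/N; ring.
have : 0 <= \big[Rplus/0]_x \big[Rplus/0]_y (F x - F y) ^ 2.
  apply/RleP/sumr_ge0 => x _; apply/sumr_ge0 => y _; exact/RleP/pow2_ge_0.
lra.
Qed.

Lemma tv_ge0 (T : finType) (mu nu : T -> R) : 0 <= tv mu nu.
Proof.
rewrite /tv; elim/big_ind: _ => [|a b ha _|S _]; [lra | | exact: Rabs_pos].
exact: Rle_trans ha (Rmax_l _ _).
Qed.

Lemma tv_le_half_l1 (T : finType) (mu nu : T -> R) :
  \big[Rplus/0]_x mu x = \big[Rplus/0]_x nu x ->
  tv mu nu <= / 2 * \big[Rplus/0]_x Rabs (mu x - nu x).
Proof.
move=> same_mass; set D := fun x => mu x - nu x.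
have D_S_le S : Rabs (meas mu S - meas nu S) <= / 2 * \big[Rplus/0]_x Rabs (D x).
  have -> : meas mu S - meas nu S = \big[Rplus/0]_(x in S) D x by rewrite /meas -big_subR.
  have mass0 : \big[Rplus/0]_(x in S) D x + \big[Rplus/0]_(x | x \notin S) D x = 0.
    have := big_subR xpredT mu nu.
    by rewrite same_mass Rminus_diag (bigID (mem S)) /=.
  have hS : Rabs (\big[Rplus/0]_(x in S) D x) <= \big[Rplus/0]_(x in S) Rabs (D x).
    apply/RleP; exact: (ler_norm_sum _ D).
  have hC : Rabs (\big[Rplus/0]_(x | x \notin S) D x)
            <= \big[Rplus/0]_(x | x \notin S) Rabs (D x).
    apply/RleP; exact: (ler_norm_sum _ D).
  rewrite [X in _ <= _ * X](bigID (mem S)) /=.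
  have opp : \big[Rplus/0]_(x | x \notin S) D x = - \big[Rplus/0]_(x in S) D x by lra.
  rewrite opp Rabs_Ropp in hC; lra.
apply: (big_ind (fun v => v <= / 2 * \big[Rplus/0]_x Rabs (D x))) => [| a b | S _].
- apply: Rmult_le_pos; first lra.
  apply/RleP/sumr_ge0 => x _; exact/RleP/Rabs_pos.
- exact: Rmax_lub.
- exact: D_S_le.
Qed.

Lemma tv_sq_le_l2 (T : finType) (mu nu : T -> R) :
  \big[Rplus/0]_x mu x = \big[Rplus/0]_x nu x ->
  tv mu nu ^ 2 <= / 4 * (INR #|T| * \big[Rplus/0]_x (mu x - nu x) ^ 2).
Proof.
move=> same_mass.
have l1 := tv_le_half_l1 same_mass.
have cs := sum_sq_le_card (fun x => Rabs (mu x - nu x)).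
rewrite (eq_bigr _ (fun x _ => pow2_abs (mu x - nu x))) in cs.
apply: Rle_trans (pow_incr _ _ 2 (conj (tv_ge0 mu nu) l1)) _.
rewrite Rpow_mult_distr; apply: Rle_trans (Rmult_le_compat_l _ _ _ _ cs); simpl; lra.
Qed.

(* [cproj false] and [cproj true] are the kernels of the orthogonal projections
   of R^'I_3 onto the constants and onto the mean-zero functions. *)
Definition cproj (s : bool) (u a : 'I_3) : R := if s then indR (u == a) - 1/3 else 1/3.

Definition eproj (n : nat) (A : {set 'I_n}) (x y : hvert n 3) : R :=
  \big[Rmult/1]_i cproj (i \in A) (x i) (y i).

Definition eigval (n : nat) (A : {set 'I_n}) : R := 1 - 3 * INR #|A| / (2 * INR n).

Local Notation o3_0 := (@Ordinal 3 0 isT).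
Local Notation o3_1 := (@Ordinal 3 1 isT).
Local Notation o3_2 := (@Ordinal 3 2 isT).

Lemma big_ord3 (F : 'I_3 -> R) :
  \big[Rplus/0]_(a : 'I_3) F a = F o3_0 + F o3_1 + F o3_2.
Proof.
by rewrite !big_ord_recl big_ord0 Rplus_0_r Rplus_assoc; do 3 f_equal; apply: val_inj.
Qed.

Lemma ord3P (a : 'I_3) : [\/ a = o3_0, a = o3_1 | a = o3_2].
Proof.
case: a => [[|[|[|m]]] Hm] //; [apply: Or31 | apply: Or32 | apply: Or33]; exact: val_inj.
Qed.

Ltac ord3_cases a := destruct (ord3P a) as [ -> | -> | -> ].

Lemma cproj_resolution (u a : 'I_3) : cproj true u a + cproj false u a = indR (u == a).
Proof. rewrite /cproj; lra. Qed.

Lemma cproj_stay (s : bool) (u b : 'I_3) :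
  \big[Rplus/0]_(a : 'I_3) (cproj s u a * indR (a == b)) = cproj s u b.
Proof.
by rewrite big_ord3; case: s; ord3_cases u; ord3_cases b; rewrite /cproj /indR /=; lra.
Qed.

Lemma cproj_move (s : bool) (u b : 'I_3) :
  \big[Rplus/0]_(a : 'I_3) (cproj s u a * indR (a != b)) = (if s then -1 else 2) * cproj s u b.
Proof.
by rewrite big_ord3; case: s; ord3_cases u; ord3_cases b; rewrite /cproj /indR /=; lra.
Qed.

Lemma cproj_orth (s t : bool) (u : 'I_3) :
  \big[Rplus/0]_(a : 'I_3) (cproj s u a * cproj t u a)
  = indR (s == t) * (if s then 2/3 else 1/3).
Proof.
by rewrite big_ord3; case: s; case: t; ord3_cases u; rewrite /cproj /indR /=; lra.
Qed.

Lemma eproj_resolution (n : nat) (x y : hvert n 3) :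
  \big[Rplus/0]_(A : {set 'I_n}) eproj A x y = indR (x == y).
Proof.
transitivity (\big[Rmult/1]_i (cproj true (x i) (y i) + cproj false (x i) (y i))).
  rewrite (@bigA_distr R 0 1 Rmult Rplus).
  by apply: eq_bigr => A _; apply: eq_bigr => i _; case: (i \in A).
under eq_bigr => i _ do rewrite cproj_resolution.
rewrite prod_indR; congr indR; apply/forallP/eqP => [eq_xy|-> i //].
by apply/ffunP => i; apply/eqP.
Qed.

Lemma indR_hadj (n : nat) (z y : hvert n 3) :
  indR (hadj z y) = \big[Rplus/0]_i \big[Rmult/1]_j
     indR (if j == i then z j != y j else z j == y j).
Proof.
have move_only_at i : [forall j, if j == i then z j != y j else z j == y j]
                      = ([set j | z j != y j] == [set i]).
  apply/forallP/eqP => [H|D].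
    apply/setP => j; rewrite !inE; move: (H j); case: (j == i) => //.
    by move/eqP ->; rewrite eqxx.
  by move=> j; move/setP: D => /(_ j); rewrite !inE => <-; case: (z j == y j).
under eq_bigr => i _ do rewrite prod_indR move_only_at.
rewrite /hadj; case: (boolP (#|[set i | z i != y i]| == 1%nat)).
  move/cards1P => [i0 ->].
  rewrite (bigD1 i0) //= {1}/indR eqxx big1 ?Rplus_0_r // => i Hi.
  by rewrite /indR; case: eqP => // /set1_inj eq_i; rewrite eq_i eqxx in Hi.
move=> not1; symmetry; apply: big1 => i _.
by rewrite /indR; case: eqP => // D; rewrite D cards1 eqxx in not1.
Qed.

Lemma eproj_move (n : nat) (A : {set 'I_n}) (x y : hvert n 3) (i : 'I_n) :
  \big[Rplus/0]_(z : hvert n 3) \big[Rmult/1]_j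
     (cproj (j \in A) (x j) (z j) * indR (if j == i then z j != y j else z j == y j))
  = (2 - 3 * indR (i \in A)) * eproj A x y.
Proof.
rewrite -(@bigA_distr_bigA R 0 1 Rmult Rplus _ _
  (fun j a => cproj (j \in A) (x j) a * indR (if j == i then a != y j else a == y j))).
transitivity (\big[Rmult/1]_j ((if j == i then 2 - 3 * indR (j \in A) else 1)
                               * cproj (j \in A) (x j) (y j))).
  apply: eq_bigr => j _; case: (j == i).
    by rewrite cproj_move /indR; case: (j \in A); f_equal; lra.
  by rewrite cproj_stay Rmult_1_l.
rewrite big_split /= /eproj (bigD1 i) //= eqxx big1 ?Rmult_1_r // => j /negbTE -> //.
Qed.

Lemma eproj_step (n : nat) (A : {set 'I_n}) (x y : hvert n 3) : (0 < n)%nat ->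
  \big[Rplus/0]_z (eproj A x z * hp z y) = eigval A * eproj A x y.
Proof.
move=> n_gt0; have n_pos : 0 < INR n by apply/lt_0_INR/ltP.
have hpE z : hp z y = / (2 * INR n) * indR (hadj z y).
  by rewrite /hp /indR; case: hadj; rewrite /= ?Rmult_0_r // Rmult_1_r Rmult_comm.
transitivity (/ (2 * INR n) * \big[Rplus/0]_i \big[Rplus/0]_(z : hvert n 3)
   \big[Rmult/1]_j (cproj (j \in A) (x j) (z j) *
                    indR (if j == i then z j != y j else z j == y j))).
  rewrite exchange_big mulR_sumr; apply: eq_bigr => z _.
  rewrite hpE indR_hadj Rmult_comm Rmult_assoc; f_equal.
  rewrite mulR_suml; apply: eq_bigr => i _.
  by rewrite Rmult_comm /eproj -big_split.
under eq_bigr => i _ do rewrite eproj_move.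
rewrite -mulR_suml big_subR big_constR card_ord -mulR_sumr big_indR /eigval.
have -> : #|(fun i => i \in A)| = #|A| by apply: eq_card.
field; lra.
Qed.

Lemma hpk_spectral (n k : nat) (x y : hvert n 3) : (0 < n)%nat ->
  hpk k x y = \big[Rplus/0]_(A : {set 'I_n}) (eigval A ^ k * eproj A x y).
Proof.
move=> n_gt0; elim: k y => [|k IH] y /=.
  rewrite -[if _ then _ else _]/(indR (x == y)) -eproj_resolution.
  by apply: eq_bigr => A _; rewrite Rmult_1_l.
under eq_bigr => z _ do rewrite IH mulR_suml.
rewrite exchange_big /=; apply: eq_bigr => A _.
under eq_bigr => z _ do rewrite Rmult_assoc.
by rewrite -mulR_sumr eproj_step //; ring.
Qed.

Lemma eproj_orth (n : nat) (S T : {set 'I_n}) (x : hvert n 3) :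
  \big[Rplus/0]_y (eproj S x y * eproj T x y)
  = indR (S == T) * ((1/3) ^ n * 2 ^ #|S|).
Proof.
transitivity (\big[Rmult/1]_i \big[Rplus/0]_(a : 'I_3)
                (cproj (i \in S) (x i) a * cproj (i \in T) (x i) a)).
  rewrite (@bigA_distr_bigA R 0 1 Rmult Rplus); apply: eq_bigr => y _.
  by rewrite /eproj -big_split.
under eq_bigr => i _ do rewrite cproj_orth.
rewrite big_split /= prod_indR; congr (indR _ * _).
  by apply/forallP/eqP => [same|-> i //]; apply/setP => i; apply/eqP.
transitivity (\big[Rmult/1]_(i : 'I_n) (1/3 * (if i \in S then 2 else 1))).
  by apply: eq_bigr => i _; case: (i \in S); lra.
rewrite big_split /= -big_mkcond !prod_constR; f_equal.
by rewrite cardT size_enum_ord.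
Qed.

Lemma eproj_set0 (n : nat) (x y : hvert n 3) : eproj set0 x y = (1/3) ^ n.
Proof.
rewrite /eproj; under eq_bigr => i _ do rewrite in_set0.
by rewrite prod_constR cardT size_enum_ord.
Qed.

Section Parseval.

Variables (n : nat) (x0 : hvert n 3) (a : {set 'I_n} -> R).

Lemma eproj_coef (T : {set 'I_n}) :
  \big[Rplus/0]_x ((\big[Rplus/0]_A (a A * eproj A x0 x)) * eproj T x0 x)
  = a T * ((1/3) ^ n * 2 ^ #|T|).
Proof.
under eq_bigr => x _ do rewrite mulR_suml.
rewrite exchange_big /= (bigD1 T) //= [X in _ + X]big1 ?Rplus_0_r; last first.
  move=> A /negbTE neq_AT; under eq_bigr => x _ do rewrite Rmult_assoc.
  by rewrite -mulR_sumr eproj_orth neq_AT /indR Rmult_0_l Rmult_0_r.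
under eq_bigr => x _ do rewrite Rmult_assoc.
by rewrite -mulR_sumr eproj_orth eqxx /indR Rmult_1_l.
Qed.

Lemma eproj_parseval :
  \big[Rplus/0]_x (\big[Rplus/0]_A (a A * eproj A x0 x)) ^ 2
  = \big[Rplus/0]_A (a A ^ 2 * ((1/3) ^ n * 2 ^ #|A|)).
Proof.
transitivity (\big[Rplus/0]_x \big[Rplus/0]_A
   (a A * ((\big[Rplus/0]_B (a B * eproj B x0 x)) * eproj A x0 x))).
  apply: eq_bigr => x _; rewrite -Rsqr_pow2 /Rsqr mulR_sumr.
  by apply: eq_bigr => A _; ring.
rewrite exchange_big; apply: eq_bigr => A _.
by rewrite -mulR_sumr eproj_coef; ring.
Qed.

End Parseval.

Lemma eigval_set0 (n : nat) : eigval (set0 : {set 'I_n}) = 1.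
Proof. by rewrite /eigval cards0 /= Rmult_0_r /Rdiv Rmult_0_l Rminus_0_r. Qed.

Lemma card_hvert (n : nat) : INR #|hvert n 3| = 3 ^ n.
Proof.
rewrite card_ffun !card_ord INRE natrX RpowE -INRE; congr (GRing.exp _ _); simpl; lra.
Qed.

Section WalkFromOrigin.

Variables (n k : nat).
Hypothesis n_gt0 : (0 < n)%nat.

Let o := horigin n 2.
Let b (A : {set 'I_n}) : R := if A == set0 then 0 else eigval A ^ k.

Lemma hnu_sub_hpi (x : hvert n 3) :
  hnu k x - hpi x = \big[Rplus/0]_A (b A * eproj A o x).
Proof.
rewrite /hnu hpk_spectral // (bigD1 set0) //= [RHS](bigD1 set0) //=.
rewrite /b eqxx eigval_set0 eproj_set0 /hpi card_hvert /Rdiv Rmult_1_l pow_inv.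
rewrite pow1 Rmult_0_l Rplus_0_l Rmult_1_l.
have -> : forall u v : R, u + v - u = v by move=> u v; ring.
by apply: eq_bigr => A /negbTE ->.
Qed.

Lemma hnu_mass : \big[Rplus/0]_(x : hvert n 3) hnu k x = \big[Rplus/0]_(x : hvert n 3) hpi x.
Proof.
have := eproj_coef o b set0; rewrite /b eqxx Rmult_0_l.
under eq_bigr => x _ do rewrite -hnu_sub_hpi eproj_set0.
rewrite -mulR_suml big_subR => /Rmult_integral [diff0|zero]; first exact: Rminus_diag_uniq.
by case: (pow_nonzero (1/3) n); lra.
Qed.

Lemma hnu_l2 :
  INR #|hvert n 3| * \big[Rplus/0]_(x : hvert n 3) (hnu k x - hpi x) ^ 2
  = \big[Rplus/0]_(A : {set 'I_n}) ((eigval A ^ k) ^ 2 * 2 ^ #|A|) - 1.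
Proof.
under eq_bigr => x _ do rewrite hnu_sub_hpi.
rewrite eproj_parseval card_hvert mulR_sumr.
have cancel : 3 ^ n * (1/3) ^ n = 1.
  by rewrite -Rpow_mult_distr -[RHS](pow1 n); f_equal; field.
have term A : A != set0 ->
    3 ^ n * (b A ^ 2 * ((1/3) ^ n * 2 ^ #|A|)) = (eigval A ^ k) ^ 2 * 2 ^ #|A|.
  move=> /negbTE nA; rewrite /b nA -[RHS]Rmult_1_l -[in RHS]cancel; ring.
rewrite [LHS](bigD1 set0) // [X in _ = X - 1](bigD1 set0) // (eq_bigr _ term) /=.
set rest := \big[Rplus/0]_(A | A != set0) _.
by rewrite /b eqxx eigval_set0 cards0 pow1; ring.
Qed.

End WalkFromOrigin.

Lemma exp_pow (x : R) (m : nat) : exp x ^ m = exp (INR m * x).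
Proof. by rewrite -Rpower_pow; [rewrite /Rpower ln_exp | exact: exp_pos]. Qed.

Lemma card_le_INR (n : nat) (A : {set 'I_n}) : INR #|A| <= INR n.
Proof. by apply/le_INR/leP; rewrite -[n in (_ <= n)%nat]card_ord max_card. Qed.

Lemma eigval_pow_sq_le (n k : nat) (A : {set 'I_n}) : (0 < n)%nat ->
  (eigval A ^ k) ^ 2 <= exp (- (3 * INR k / INR n)) ^ #|A| + (1/4) ^ k.
Proof.
move=> n_gt0; have n_pos : 0 < INR n by apply/lt_0_INR/ltP.
have exp_pow_ge0 : 0 <= exp (- (3 * INR k / INR n)) ^ #|A|.
  exact/pow_le/Rlt_le/exp_pos.
have quarter_pow_ge0 : 0 <= (1/4) ^ k by apply: pow_le; lra.
rewrite -pow_mult Nat.mul_comm pow_mult.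
have [lam_ge0|lam_lt0] := Rle_or_lt 0 (eigval A).
  have lam_le_exp : eigval A <= exp (- (3 * INR #|A| / (2 * INR n))).
    by rewrite /eigval; have := exp_ineq1_le (- (3 * INR #|A| / (2 * INR n))); lra.
  suff : (eigval A ^ 2) ^ k <= exp (- (3 * INR k / INR n)) ^ #|A| by lra.
  apply: Rle_trans (pow_incr _ _ k (conj (pow2_ge_0 _) (pow_incr _ _ 2 (conj lam_ge0 lam_le_exp)))) _.
  by rewrite !exp_pow; apply: Req_le; f_equal; rewrite /=; field; lra.
suff : (eigval A ^ 2) ^ k <= (1/4) ^ k by lra.
have lam_ge : - (1/2) <= eigval A.
  have := card_le_INR A; rewrite /eigval => card_le.
  apply: (Rmult_le_reg_r (2 * INR n)); first lra.
  by rewrite Rmult_minus_distr_r; field_simplify; lra.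
by apply: pow_incr; split; [exact: pow2_ge_0 | nra].
Qed.

Lemma sum_eigval_sq_le (n k : nat) : (0 < n)%nat ->
  \big[Rplus/0]_(A : {set 'I_n}) ((eigval A ^ k) ^ 2 * 2 ^ #|A|)
  <= (2 * exp (- (3 * INR k / INR n)) + 1) ^ n + (1/4) ^ k * 3 ^ n.
Proof.
move=> n_gt0; set y := exp (- (3 * INR k / INR n)).
apply: (@Rle_trans _ (\big[Rplus/0]_(A : {set 'I_n}) ((2 * y) ^ #|A| + (1/4) ^ k * 2 ^ #|A|))).
  apply/RleP/ler_sum => A _; apply/RleP.
  rewrite Rpow_mult_distr Rmult_comm (Rmult_comm ((1/4) ^ k)) -Rmult_plus_distr_l.
  apply: Rmult_le_compat_l; first by apply: pow_le; lra.
  exact: eigval_pow_sq_le.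
by rewrite big_split /= -mulR_sumr !sum_pow_card (_ : 2 + 1 = 3); lra.
Qed.

Lemma one_add_div_pow_le_exp (E : R) (m : nat) : 0 <= E -> (0 < m)%nat -> (1 + E / INR m) ^ m <= exp E.
Proof.
move=> E_ge0 m_gt0; have m_pos : 0 < INR m by apply/lt_0_INR/ltP.
have -> : exp E = exp (E / INR m) ^ m by rewrite exp_pow; f_equal; field; lra.
apply: pow_incr; split; last exact: exp_ineq1_le.
have : 0 <= E / INR m by apply: Rmult_le_pos; [done | exact/Rlt_le/Rinv_0_lt_compat].
lra.
Qed.

Lemma exp4_le_64 : exp 4 <= 64.
Proof.
have e16 : exp (1/16) <= 16/15.
  have := exp_ineq1_le (- (1/16)); rewrite exp_Ropp.
  have := exp_pos (1/16); move: (exp (1/16)) => e e_pos inv_ge.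
  have := Rmult_le_compat_l _ _ _ (Rlt_le _ _ e_pos) inv_ge.
  rewrite Rinv_r; lra.
have -> : 4 = INR 64 * (1/16) by rewrite INR_IZR_INZ /=; lra.
rewrite -exp_pow; apply: Rle_trans (pow_incr _ _ 64 (conj (Rlt_le _ _ (exp_pos _)) e16)) _.
rewrite /Rdiv Rpow_mult_distr pow_inv !pow_IZR.
apply: (Rmult_le_reg_r (IZR (15 ^ Z.of_nat 64))); first by apply: IZR_lt; vm_compute.
rewrite Rmult_assoc Rinv_l ?Rmult_1_r; last by apply: not_0_IZR; vm_compute.
by rewrite -mult_IZR; apply: IZR_le; vm_compute.
Qed.

Lemma pow3_9n_le (n : nat) : (3 <= n)%nat -> 3 ^ (9 * n) <= 9 ^ 9 * (2 * INR n) ^ (4 * n).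
Proof.
move=> n_ge3; have [n_ge6|n_lt6] := leqP 6 n.
  have t_ge : 12 <= 2 * INR n.
    have := le_INR 6 n (elimT leP n_ge6); rewrite (INR_IZR_INZ 6) /=; lra.
  have : (3 ^ 9) ^ n <= ((2 * INR n) ^ 4) ^ n.
    by apply: pow_incr; split; [| apply: Rle_trans (pow_incr 12 _ 4 _)]; rewrite /=; lra.
  have : 0 <= ((2 * INR n) ^ 4) ^ n by apply/pow_le/pow_le; lra.
  rewrite !pow_mult; lra.
have : (n = 3 \/ n = 4 \/ n = 5)%nat by lia.
have double_INR m : 2 * INR m = IZR (Z.of_nat (2 * m)) by rewrite -INR_IZR_INZ mult_INR.
by case=> [->|[->|->]]; rewrite double_INR !pow_IZR -mult_IZR; apply: IZR_le; vm_compute.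
Qed.

Lemma pow_le_reg (a b : R) (m : nat) : 0 <= a -> 0 <= b -> a ^ m.+1 <= b ^ m.+1 -> a <= b.
Proof. by rewrite !RpowE => /RleP a_ge0 /RleP b_ge0 /RleP; rewrite ler_pXn2r ?nnegrE // => /RleP. Qed.

(* After raising both sides to the 9th power, exp(3k/n)^(4n) = e^(12k) is
   compared with 4^(9k) = 64^(3k) through e^4 <= 64. *)
Lemma pow3_exp_le (n k : nat) : (3 <= n)%nat -> 2 * INR n <= exp (3 * INR k / INR n) ->
  3 ^ n * exp (3 * INR k / INR n) <= 9 * (2 * INR n) * 4 ^ k.
Proof.
move=> n_ge3; set t := 2 * INR n; set X := exp _ => t_le_X.
have n_pos : 0 < INR n by apply/lt_0_INR/ltP; lia.
have t_pos : 0 < t by rewrite /t; lra.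
have X_pow_le : X ^ (4 * n) <= 4 ^ (9 * k).
  rewrite /X exp_pow (_ : INR (4 * n) * _ = INR (3 * k) * 4); last first.
    by rewrite !mult_INR /=; field; lra.
  rewrite -exp_pow (_ : (9 * k = 3 * (3 * k))%nat); last by lia.
  rewrite [X in _ <= X]pow_mult; apply: pow_incr.
  by split; [exact/Rlt_le/exp_pos | have := exp4_le_64; rewrite /=; lra].
set m := (4 * n - 9)%nat.
have pow_4n (x : R) : x ^ (4 * n) = x ^ 9 * x ^ m.
  by rewrite -pow_add; congr (_ ^ _); rewrite /m; lia.
have pos9 : 0 <= 9 ^ 9 * t ^ 9 by apply: Rmult_le_pos; apply: pow_le; lra.
have three_pow_le : 3 ^ (9 * n) <= 9 ^ 9 * t ^ 9 * X ^ m.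
  apply: Rle_trans (pow3_9n_le n_ge3) _; rewrite -/t pow_4n -Rmult_assoc.
  by apply: Rmult_le_compat_l => //; apply: pow_incr; lra.
apply: (@pow_le_reg _ _ 8).
- by apply: Rmult_le_pos; [apply: pow_le | apply/Rlt_le/exp_pos]; lra.
- by apply: Rmult_le_pos; [| apply: pow_le]; lra.
have lhs9 : (3 ^ n * X) ^ 9 = 3 ^ (9 * n) * X ^ 9.
  by rewrite Rpow_mult_distr -pow_mult Nat.mul_comm.
have rhs9 : (9 * t * 4 ^ k) ^ 9 = 9 ^ 9 * t ^ 9 * 4 ^ (9 * k).
  by rewrite Rpow_mult_distr (Rpow_mult_distr 9 t) -pow_mult Nat.mul_comm.
rewrite lhs9 rhs9.
have X9_ge0 : 0 <= X ^ 9 by apply/pow_le/Rlt_le/exp_pos.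
apply: Rle_trans (Rmult_le_compat_r _ _ _ X9_ge0 three_pow_le) _.
rewrite Rmult_assoc (Rmult_comm (X ^ m)) -pow_4n.
exact: Rmult_le_compat_l.
Qed.

Section MixingTime.

Variables (n k : nat) (c : R).
Hypothesis n_gt0 : (0 < n)%nat.
Hypothesis k_def : INR k = INR n / 3 * (ln (2 * INR n) + c).

Let n_pos : 0 < INR n. Proof. exact/lt_0_INR/ltP. Qed.

Lemma exp_rate_mixing : exp (3 * INR k / INR n) = 2 * INR n * exp c.
Proof.
rewrite (_ : 3 * INR k / INR n = ln (2 * INR n) + c); last by rewrite k_def; field; lra.
by rewrite exp_plus exp_ln //; lra.
Qed.

Lemma nonneg_part_le : (2 * exp (- (3 * INR k / INR n)) + 1) ^ n <= exp (exp (- c)).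
Proof.
rewrite exp_Ropp exp_rate_mixing (_ : 2 * / (2 * INR n * exp c) + 1 = 1 + exp (- c) / INR n).
  exact: one_add_div_pow_le_exp (Rlt_le _ _ (exp_pos _)) n_gt0.
by rewrite exp_Ropp; field; split; [apply: Rgt_not_eq; exact: exp_pos | lra].
Qed.

Lemma neg_part_le : (3 <= n)%nat -> 0 < c -> (1/4) ^ k * 3 ^ n <= 9 * exp (- c).
Proof.
move=> n_ge3 c_pos; have ec_pos := exp_pos c.
have four_k : 0 < 4 ^ k by apply: pow_lt; lra.
have rate_ge : 2 * INR n <= exp (3 * INR k / INR n).
  by rewrite exp_rate_mixing; have := exp_ineq1_le c; nra.
have := pow3_exp_le n_ge3 rate_ge; rewrite exp_rate_mixing => key.
rewrite exp_Ropp (_ : (1/4) ^ k = / 4 ^ k); last by rewrite /Rdiv Rmult_1_l pow_inv.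
apply: (Rmult_le_reg_r (2 * INR n * exp c * 4 ^ k)); first by apply: Rmult_lt_0_compat; nra.
have -> : / 4 ^ k * 3 ^ n * (2 * INR n * exp c * 4 ^ k) = 3 ^ n * (2 * INR n * exp c).
  by field; lra.
have -> : 9 * / exp c * (2 * INR n * exp c * 4 ^ k) = 9 * (2 * INR n) * 4 ^ k.
  by field; lra.
exact: key.
Qed.

End MixingTime.

Theorem theorem1p2 (n k : nat) (c : R) :
  (3 <= n)%nat -> (0 < c)%R ->
  INR k = (INR n / 3 * (ln (2 * INR n) + c))%R ->
  (tv (@hnu n 2%nat k) (@hpi n 3%nat) ^ 2 <= 5 / 2 * (exp (exp (- c)) - 1))%R.
Proof.
move=> n_ge3 c_pos k_def; have n_gt0 : (0 < n)%nat by lia.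
have tv_bound := tv_sq_le_l2 (hnu_mass k n_gt0).
rewrite hnu_l2 // in tv_bound.
have := sum_eigval_sq_le k n_gt0.
have := nonneg_part_le n_gt0 k_def.
have := neg_part_le n_gt0 k_def n_ge3 c_pos.
have := exp_ineq1_le (exp (- c)).
lra.
Qed.
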